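(* Let $n$ be a natural number, $\mathrm{ADDR}$ an address, and $\mathit{EXT}$ the Findel contract description $\mathtt{And}(\mathtt{Give}(\mathtt{Scale}(n,\mathtt{One}(\mathrm{EUR}))),\ \mathtt{ScaleObs}(\mathrm{ADDR},\mathtt{Scale}(n,\mathtt{One}(\mathrm{USD}))))$, issued by Alice with Bob as (proposed) owner, in the Findel marketplace semantics described in the context, with a trustworthy gateway. If $\mathit{EXT}$ is executed (i.e., Bob successfully joins it), then Alice receives $n$ euros (from Bob), i.e., a transfer of $n$ EUR from Bob to Alice is recorded in the ledger.
   Context: Findel contract descriptions are trees built from primitives: $\mathtt{Zero}$ (do nothing); $\mathtt{One}(c)$ (transfer 1 unit of currency $c$ from issuer to owner); $\mathtt{Scale}(k,p)$ (multiply all payments of $p$ by the natural number $k$); $\mathtt{ScaleObs}(a,p)$ (multiply all payments of $p$ by a factor obtained from address $a$ via an external gateway, a partial map from addresses to values; execution fails if the gateway provides no value); $\mathtt{Give}(p)$ (swap issuer and owner in $p$); $\mathtt{And}(p_1,p_2)$ (execute $p_1$ then $p_2$); $\mathtt{Or}(p_1,p_2)$ (owner may execute exactly one of $p_1,p_2$); $\mathtt{If}(a,p_1,p_2)$ (execute $p_1$ if the boolean obtained from address $a$ is true, else $p_2$); $\mathtt{Timebound}(t_0,t_1,p)$ (execute $p$ if the current time lies in $[t_0,t_1]$). A contract has an id, a description, an issuer, an owner, a proposed owner and a scale. The marketplace state consists of the issued contracts, available descriptions, balances, a global time $t$, the gateway, a fresh id counter, a ledger (ordered list of performed transfers), and a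 list of events. Transitions: Issue (add a contract whose owner field is the issuer and with a proposed owner; event IssuedFor); Join (if the joining party is the proposed owner, the root is not $\mathtt{Or}$, the current time is within the description's validity interval, and recursive execution succeeds, then balances and ledger are updated, contracts generated by execution are added, and an Executed event is emitted; for an $\mathtt{Or}$ root the owner executes one chosen branch); Fail (if execution fails the contract is deleted with a Deleted event); Tick ($t \mapsto t+1$). Recursive execution with scale $s$: $\mathtt{One}(c)$ transfers $s$ units of $c$ from the current issuer to the current owner and records it in the ledger; $\mathtt{Or}$ nodes and $\mathtt{Timebound}$ nodes with $t_0 > t$ are not executed but instead issue a new contract with the same parties and that node as root, which the owner may later join; $\mathtt{Timebound}$ with $t > t_1$ fails. Balances may become negative (debt is allowed). *)

From Stdlib Require Import Arith ZArith List Bool.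
Import ListNotations.
Open Scope nat_scope.

Inductive Currency : Type := USD | EUR | GBP | JPY | CNY | SGD.

Definition Currency_eqb (a b : Currency) : bool :=
  match a, b with
  | USD, USD | EUR, EUR | GBP, GBP | JPY, JPY | CNY, CNY | SGD, SGD => true
  | _, _ => false
  end.

Definition Address := nat.
Definition Party := nat.
Definition Time := nat.

Inductive Primitive : Type :=
| Zero : Primitive
| One : Currency -> Primitive
| Scale : nat -> Primitive -> Primitive
| ScaleObs : Address -> Primitive -> Primitive
| Give : Primitive -> Primitive
| And : Primitive -> Primitive -> Primitive
| Or : Primitive -> Primitive -> Primitive
| If : Address -> Primitive -> Primitive -> Primitive
| Timebound : Time -> Time -> Primitive -> Primitive.

(* gateway: partial map from addresses to values; a boolean is read as value <> 0 *)
Definition Gateway := Address -> option nat.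

Record Contract : Type := mkContract {
  c_id : nat;
  c_desc : Primitive;
  c_issuer : Party;
  c_owner : Party;
  c_proposed_owner : Party;
  c_scale : nat }.

Record Transfer : Type := mkTransfer {
  tr_from : Party;
  tr_to : Party;
  tr_currency : Currency;
  tr_amount : nat;
  tr_time : Time }.

Inductive Event : Type :=
| IssuedFor : Party -> nat -> Event        (* proposed owner, contract id *)
| Executed : nat -> Event
| Deleted : nat -> Event.

Definition Balances := Party -> Currency -> Z.

Record State : Type := mkState {
  st_contracts : list Contract;
  st_descriptions : list Primitive;
  st_balances : Balances;
  st_time : Time;
  st_gateway : Gateway;
  st_fresh_id : nat;
  st_ledger : list Transfer;     (* most recent transfer first *)
  st_events : list Event }.

Record ExecState : Type := mkExec {
  ex_balances : Balances;
  ex_ledger : list Transfer;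
  ex_new : list Contract;
  ex_fresh : nat }.

Definition update_balance (b : Balances) (p : Party) (c : Currency) (dz : Z)
  : Balances :=
  fun q c' => if Nat.eqb q p && Currency_eqb c' c then (b q c' + dz)%Z else b q c'.

Definition do_transfer (t : Time) (from to_ : Party) (c : Currency) (amt : nat)
  (e : ExecState) : ExecState :=
  mkExec
    (update_balance (update_balance (ex_balances e) from c (- Z.of_nat amt))
                    to_ c (Z.of_nat amt))
    (mkTransfer from to_ c amt t :: ex_ledger e)
    (ex_new e) (ex_fresh e).

Definition defer (iss own : Party) (s : nat) (d : Primitive) (e : ExecState)
  : ExecState :=
  mkExec (ex_balances e) (ex_ledger e)
    (ex_new e ++ [mkContract (ex_fresh e) d iss own own s])
    (S (ex_fresh e)).

Fixpoint execute (t : Time) (g : Gateway) (iss own : Party) (s : nat)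
  (d : Primitive) (e : ExecState) : option ExecState :=
  match d with
  | Zero => Some e
  | One c => Some (do_transfer t iss own c s e)
  | Scale k p => execute t g iss own (s * k) p e
  | ScaleObs a p =>
      match g a with
      | Some v => execute t g iss own (s * v) p e
      | None => None
      end
  | Give p => execute t g own iss s p e
  | And p1 p2 =>
      match execute t g iss own s p1 e with
      | Some e' => execute t g iss own s p2 e'
      | None => None
      end
  | Or _ _ => Some (defer iss own s d e)
  | If a p1 p2 =>
      match g a with
      | Some v => if Nat.eqb v 0 then execute t g iss own s p2 e
                  else execute t g iss own s p1 e
      | None => None
      end
  | Timebound t0 t1 p =>
      if Nat.ltb t1 t then None
      else if Nat.ltb t t0 then Some (defer iss own s d e)
      else execute t g iss own s p e
  end.

Definition time_valid (t : Time) (d : Primitive) : bool :=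
  match d with
  | Timebound t0 t1 _ => Nat.leb t0 t && Nat.leb t t1
  | _ => true
  end.

Definition is_or (d : Primitive) : bool :=
  match d with Or _ _ => true | _ => false end.

Definition find_contract (cs : list Contract) (i : nat) : option Contract :=
  find (fun c => Nat.eqb (c_id c) i) cs.

Definition remove_contract (cs : list Contract) (i : nat) : list Contract :=
  filter (fun c => negb (Nat.eqb (c_id c) i)) cs.

Inductive Action : Type :=
| AIssue : Party -> Party -> Primitive -> Action  (* issuer, proposed owner, description *)
| AJoin : Party -> nat -> Action
| AJoinOr : Party -> nat -> bool -> Action        (* joining party, id, true = left branch *)
| AFail : Party -> nat -> Action
| ATick : Action.

Definition exec_start (s : State) : ExecState :=
  mkExec (st_balances s) (st_ledger s) [] (st_fresh_id s).

Definition after_exec (s : State) (i : nat) (e : ExecState) : State :=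
  mkState (remove_contract (st_contracts s) i ++ ex_new e)
    (st_descriptions s) (ex_balances e) (st_time s) (st_gateway s)
    (ex_fresh e) (ex_ledger e) (Executed i :: st_events s).

Definition root_to_run (d : Primitive) (left : bool) : Primitive :=
  match d with Or p1 p2 => if left then p1 else p2 | _ => d end.

Inductive step : State -> Action -> State -> Prop :=
| StepIssue : forall s iss prop d,
    step s (AIssue iss prop d)
      (mkState (st_contracts s ++ [mkContract (st_fresh_id s) d iss iss prop 1])
         (st_descriptions s) (st_balances s) (st_time s) (st_gateway s)
         (S (st_fresh_id s)) (st_ledger s)
         (IssuedFor prop (st_fresh_id s) :: st_events s))
| StepJoin : forall s p i c e,
    find_contract (st_contracts s) i = Some c ->
    c_proposed_owner c = p ->
    is_or (c_desc c) = false ->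
    time_valid (st_time s) (c_desc c) = true ->
    execute (st_time s) (st_gateway s) (c_issuer c) p (c_scale c) (c_desc c)
      (exec_start s) = Some e ->
    step s (AJoin p i) (after_exec s i e)
| StepJoinOr : forall s p i c b e,
    find_contract (st_contracts s) i = Some c ->
    c_proposed_owner c = p ->
    is_or (c_desc c) = true ->
    time_valid (st_time s) (c_desc c) = true ->
    execute (st_time s) (st_gateway s) (c_issuer c) p (c_scale c)
      (root_to_run (c_desc c) b) (exec_start s) = Some e ->
    step s (AJoinOr p i b) (after_exec s i e)
| StepFail : forall s p i c b,
    find_contract (st_contracts s) i = Some c ->
    c_proposed_owner c = p ->
    execute (st_time s) (st_gateway s) (c_issuer c) p (c_scale c)
      (root_to_run (c_desc c) b) (exec_start s) = None ->
    step s (AFail p i)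
      (mkState (remove_contract (st_contracts s) i)
         (st_descriptions s) (st_balances s) (st_time s) (st_gateway s)
         (st_fresh_id s) (st_ledger s) (Deleted i :: st_events s))
| StepTick : forall s,
    step s ATick
      (mkState (st_contracts s) (st_descriptions s) (st_balances s)
         (S (st_time s)) (st_gateway s) (st_fresh_id s) (st_ledger s)
         (st_events s)).

Definition EXT (n : nat) (addr : Address) : Primitive :=
  And (Give (Scale n (One EUR))) (ScaleObs addr (Scale n (One USD))).

(* Recursive execution only ever prepends to the ledger, so the EUR transfer
   performed by the first branch of the [And] survives whatever the second,
   observable-scaled branch does. *)
From Stdlib Require Import Arith List.
Import ListNotations.

Lemma execute_ledger_prefix (d : Primitive) (t : Time) (g : Gateway)
  (iss own : Party) (k : nat) (e e' : ExecState) :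
  execute t g iss own k d e = Some e' ->
  exists l, ex_ledger e' = l ++ ex_ledger e.
Proof.
  revert iss own k e e'.
  induction d as [| c | m p IH | a p IH | p IH | p1 IH1 p2 IH2
                  | p1 _ p2 _ | a p1 IH1 p2 IH2 | t0 t1 p IH];
    intros iss own k e e' Hexec; simpl in Hexec.
  - injection Hexec as <-; exists []; reflexivity.
  - injection Hexec as <-; exists [mkTransfer iss own c k t]; reflexivity.
  - exact (IH _ _ _ _ _ Hexec).
  - destruct (g a); [exact (IH _ _ _ _ _ Hexec) | discriminate].
  - exact (IH _ _ _ _ _ Hexec).
  - destruct (execute t g iss own k p1 e) as [e1 |] eqn:Hexec1; [| discriminate].
    destruct (IH2 _ _ _ _ _ Hexec) as [l2 ->].
    destruct (IH1 _ _ _ _ _ Hexec1) as [l1 ->].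
    exists (l2 ++ l1); apply app_assoc.
  - injection Hexec as <-; exists []; reflexivity.
  - destruct (g a) as [v |]; [| discriminate].
    destruct (Nat.eqb v 0);
      [exact (IH2 _ _ _ _ _ Hexec) | exact (IH1 _ _ _ _ _ Hexec)].
  - destruct (Nat.ltb t1 t); [discriminate |].
    destruct (Nat.ltb t t0); [injection Hexec as <-; exists []; reflexivity |].
    exact (IH _ _ _ _ _ Hexec).
Qed.

Lemma execute_ledger_incl (d : Primitive) (t : Time) (g : Gateway)
  (iss own : Party) (k : nat) (e e' : ExecState) (tr : Transfer) :
  execute t g iss own k d e = Some e' ->
  In tr (ex_ledger e) -> In tr (ex_ledger e').
Proof.
  intros Hexec Hin.
  destruct (execute_ledger_prefix _ _ _ _ _ _ _ _ Hexec) as [l ->].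
  apply in_or_app; right; exact Hin.
Qed.

Lemma execute_And_inv (p1 p2 : Primitive) (t : Time) (g : Gateway)
  (iss own : Party) (k : nat) (e e' : ExecState) :
  execute t g iss own k (And p1 p2) e = Some e' ->
  exists e1, execute t g iss own k p1 e = Some e1 /\
             execute t g iss own k p2 e1 = Some e'.
Proof.
  simpl; destruct (execute t g iss own k p1 e) as [e1 |]; [| discriminate].
  intros Hexec2; exists e1; split; [reflexivity | exact Hexec2].
Qed.

Lemma execute_Give_Scale_One (m : nat) (cur : Currency) (t : Time)
  (g : Gateway) (iss own : Party) (k : nat) (e : ExecState) :
  execute t g iss own k (Give (Scale m (One cur))) e
  = Some (do_transfer t own iss cur (k * m) e).
Proof. reflexivity. Qed.

Lemma step_join_inv (s s' : State) (p : Party) (i : nat) :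
  step s (AJoin p i) s' ->
  exists c e, find_contract (st_contracts s) i = Some c /\
    execute (st_time s) (st_gateway s) (c_issuer c) p (c_scale c) (c_desc c)
      (exec_start s) = Some e /\
    s' = after_exec s i e.
Proof.
  intros Hstep; inversion Hstep; subst.
  eexists _, _; repeat split; eassumption.
Qed.

Theorem lemma3 (n : nat) (addr : Address) (alice bob : Party)
  (s s' : State) (c : Contract) :
  find_contract (st_contracts s) (c_id c) = Some c ->
  c_desc c = EXT n addr ->
  c_issuer c = alice ->
  c_owner c = alice ->
  c_proposed_owner c = bob ->
  c_scale c = 1 ->
  step s (AJoin bob (c_id c)) s' ->
  exists tr, In tr (st_ledger s') /\
    tr_from tr = bob /\ tr_to tr = alice /\
    tr_currency tr = EUR /\ tr_amount tr = n.
Proof.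
  intros Hfind Hdesc Hissuer _ _ Hscale Hstep.
  destruct (step_join_inv _ _ _ _ Hstep) as (c0 & e & Hfind0 & Hexec & ->).
  rewrite Hfind in Hfind0; injection Hfind0 as <-.
  rewrite Hdesc, Hissuer, Hscale in Hexec.
  destruct (execute_And_inv _ _ _ _ _ _ _ _ _ Hexec) as (e1 & Hgive & Hobs).
  rewrite execute_Give_Scale_One, Nat.mul_1_l in Hgive; injection Hgive as <-.
  exists (mkTransfer bob alice EUR n (st_time s)).
  repeat split.
  apply (execute_ledger_incl _ _ _ _ _ _ _ _ _ Hobs).
  left; reflexivity.
Qed.
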